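(* Let $\mathcal{W}$ be a set and let $(d_\epsilon)_{\epsilon\ge0}$ be a family of functions $d_\epsilon:\mathcal{W}\times\mathcal{W}\to\mathbb{R}$ such that for each fixed $x,y\in\mathcal{W}$ the map $\epsilon\mapsto d_\epsilon(x,y)$ is right continuous and weakly decreasing, and each $d_\epsilon$ is symmetric and satisfies the triangle inequality. For $k>0$ define $d^k(x,y)=\inf\{\epsilon\ge0:d_\epsilon(x,y)\le k\epsilon\}$. If $y,\tilde y\in\mathcal{W}$ and there exists $\delta>0$ with $d_\delta(y,\tilde y)=0$, then for every $x\in\mathcal{W}$, \[ |d^k(x,y)-d^k(x,\tilde y)|\le\delta. \] *)

From HB Require Import structures.
From mathcomp Require Import all_boot all_order all_algebra.
From mathcomp Require Import all_classical all_reals all_analysis.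
Set Implicit Arguments. Unset Strict Implicit. Unset Printing Implicit Defensive.
Import Order.TTheory GRing.Theory Num.Theory.
Import numFieldNormedType.Exports.
Local Open Scope classical_set_scope.
Local Open Scope ring_scope.

Definition dk {R : realType} {W : Type} (d : R -> W -> W -> R) (k : R)
  (x y : W) : R :=
  inf [set e : R | 0 <= e /\ d e x y <= k * e].

From HB Require Import structures.
From mathcomp Require Import all_boot all_order all_algebra.
From mathcomp Require Import all_classical all_reals all_analysis.
Import Order.TTheory GRing.Theory Num.Theory.
Import numFieldNormedType.Exports.
Local Open Scope classical_set_scope.
Local Open Scope ring_scope.

Set Implicit Arguments.
Unset Strict Implicit.
Unset Printing Implicit Defensive.

(* If d_delta(y, y~) = 0 then, by monotonicity, d_e(y, y~) <= 0 for every e >= delta.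
   Hence whenever e is admissible for (x, y), i.e. d_e(x, y) <= k e, the triangle
   inequality at level e + delta shows that e + delta is admissible for (x, y~).
   Taking infima gives d^k(x, y~) <= d^k(x, y) + delta, and symmetry of d_e gives
   the other inequality. *)

Lemma inf_le_addr (R : realType) (A B : set R) (c : R) :
  A !=set0 -> has_lbound B -> (forall a, A a -> B (a + c)) ->
  inf B <= inf A + c.
Proof.
move=> A0 lbB AcB; rewrite -lerBlDr; apply: lb_le_inf => // a Aa.
by rewrite lerBlDr; apply: ge_inf => //; exact: AcB.
Qed.

Section AdmissibleLevels.
Variables (R : realType) (W : Type) (d : R -> W -> W -> R).
Hypothesis hdec : forall (x y : W) (e1 e2 : R), 0 <= e1 -> e1 <= e2 ->
  d e2 x y <= d e1 x y.
Hypothesis htri : forall (x y z : W) (e : R), 0 <= e ->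
  d e x z <= d e x y + d e y z.
Variables (k : R) (hk : 0 < k).

Definition admissible (x y : W) := [set e : R | 0 <= e /\ d e x y <= k * e].

Lemma dkE x y : dk d k x y = inf (admissible x y).
Proof. by []. Qed.

Lemma admissible_lbound x y : has_lbound (admissible x y).
Proof. by exists 0 => e []. Qed.

Lemma admissible_neq0 x y : admissible x y !=set0.
Proof.
set e := Num.max 0 (d 0 x y / k).
have e_ge0 : 0 <= e by rewrite le_max lexx.
exists e; split=> //; apply: le_trans (hdec x y (lexx 0) e_ge0) _.
by rewrite -ler_pdivrMl // mulrC le_max lexx orbT.
Qed.

Lemma admissible_shift x y1 y2 (delta e : R) :
  0 <= delta -> (forall e', delta <= e' -> d e' y1 y2 <= 0) ->
  admissible x y1 e -> admissible x y2 (e + delta).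
Proof.
move=> delta_ge0 d12 [e_ge0 de]; have ed_ge0 := addr_ge0 e_ge0 delta_ge0.
split=> //; apply: le_trans (htri x y1 y2 ed_ge0) _.
rewrite -[k * _]addr0; apply: lerD; last by apply: d12; rewrite lerDr.
apply: le_trans (hdec x y1 e_ge0 _) _; first by rewrite lerDl.
by apply: le_trans de _; rewrite ler_pM2l // lerDl.
Qed.

Lemma dk_le_addr x y1 y2 (delta : R) :
  0 <= delta -> (forall e, delta <= e -> d e y1 y2 <= 0) ->
  dk d k x y2 <= dk d k x y1 + delta.
Proof.
move=> delta_ge0 d12; rewrite !dkE; apply: inf_le_addr.
- exact: admissible_neq0.
- exact: admissible_lbound.
- by move=> e; exact: admissible_shift.
Qed.

End AdmissibleLevels.

Theorem theorem4p10 (R : realType) (W : Type) (d : R -> W -> W -> R)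
  (hrc : forall (x y : W) (e : R), 0 <= e ->
     (fun t => d t x y) @ e^'+ --> d e x y)
  (hdec : forall (x y : W) (e1 e2 : R), 0 <= e1 -> e1 <= e2 ->
     d e2 x y <= d e1 x y)
  (hsym : forall (x y : W) (e : R), 0 <= e -> d e x y = d e y x)
  (htri : forall (x y z : W) (e : R), 0 <= e -> d e x z <= d e x y + d e y z)
  (k : R) (hk : 0 < k) (y yt : W) (delta : R) (hdelta : 0 < delta)
  (h0 : d delta y yt = 0) :
  forall x : W, `|dk d k x y - dk d k x yt| <= delta.
Proof.
move=> x; have delta_ge0 := ltW hdelta.
have d_y_yt e : delta <= e -> d e y yt <= 0.
  by move=> le_delta_e; rewrite -h0; exact: hdec.
have d_yt_y e : delta <= e -> d e yt y <= 0.
  move=> le_delta_e; rewrite -hsym; first exact: d_y_yt.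
  exact: le_trans le_delta_e.
rewrite ler_norml lerBlDr lerNl opprB lerBlDr !(addrC delta).
by rewrite (dk_le_addr hdec htri hk x delta_ge0 d_y_yt)
           (dk_le_addr hdec htri hk x delta_ge0 d_yt_y).
Qed.
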